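(* Let $M\ge1$, $\beta,\hat\beta>0$, and suppose $$\beta^{-1}<1+(M-1)\,m_0(\hat\beta)^2 .$$ Then $\mathbf{p}=\mathbf{0}$ is not a global maximizer of $$g(\mathbf{p};\hat\beta,\beta)=\log2-\frac{\beta|\mathbf{p}|^2}{2}+\big\langle\log\cosh(\beta\,\mathbf{s}\cdot\mathbf{p})\big\rangle_{\mathbf{s},\hat\beta},\qquad\mathbf{p}\in\mathbb{R}^M,$$ the scalar equation $p=\big\langle s_1\tanh\big(\beta p\sum_{\mu=1}^M s_\mu\big)\big\rangle_{\mathbf{s},\hat\beta}$ has exactly one solution $\bar p>0$, and $\mathbf{p}=\pm\bar p\,\mathbf{1}$ are solutions of $\mathbf{p}=\langle\mathbf{s}\tanh(\beta\,\mathbf{s}\cdot\mathbf{p})\rangle_{\mathbf{s},\hat\beta}$.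
   Context: $m_0(\hat\beta)$ is the largest nonnegative solution of $m=\tanh(\hat\beta m)$. $\langle\cdot\rangle_{\mathbf{s},\hat\beta}$ denotes expectation over $\mathbf{s}=(s_1,\dots,s_M)\in\{-1,1\}^M$ with i.i.d. entries of mean $m_0(\hat\beta)$. *)

From mathcomp Require Import all_boot all_order all_algebra.
From mathcomp Require Import all_classical all_reals all_analysis.
Set Implicit Arguments. Unset Strict Implicit. Unset Printing Implicit Defensive.
Import Order.TTheory GRing.Theory Num.Theory.
Local Open Scope ring_scope.
Local Open Scope classical_set_scope.

Section Defs.
Variable R : realType.

Definition cosh (x : R) : R := (expR x + expR (- x)) / 2.
Definition tanh (x : R) : R := (expR x - expR (- x)) / (expR x + expR (- x)).

Definition m0 (bh : R) : R := sup [set m : R | 0 <= m /\ m = tanh (bh * m)].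

Definition spin (b : bool) : R := if b then 1 else -1.

(* <f(s)>_{s,bh}: s in {-1,1}^M with i.i.d. entries of mean m0 bh,
   i.e. P(s_i = +-1) = (1 +- m0 bh)/2 *)
Definition avg (M : nat) (bh : R) (f : {ffun 'I_M -> bool} -> R) : R :=
  \sum_(s : {ffun 'I_M -> bool})
     (\prod_(i < M) ((1 + m0 bh * spin (s i)) / 2)) * f s.

Definition sdot (M : nat) (s : {ffun 'I_M -> bool}) (p : 'I_M -> R) : R :=
  \sum_(i < M) spin (s i) * p i.

Definition gfun (M : nat) (bh b : R) (p : 'I_M -> R) : R :=
  ln 2 - b * (\sum_(i < M) p i ^+ 2) / 2
  + avg bh (fun s => ln (cosh (b * sdot s p))).

End Defs.
Arguments spin {R} b.
Arguments cosh {R} x.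
Arguments tanh {R} x.

From mathcomp Require Import all_boot all_order all_algebra.
From mathcomp Require Import all_classical all_reals all_analysis.
From mathcomp Require Import ring lra perm.
Import Order.TTheory GRing.Theory Num.Theory numFieldNormedType.Exports.
Local Open Scope ring_scope.

(* Write S(s) = sum_mu s_mu for the magnetization and m = m0 bh, which lies in
   [0, 1].  Under the product measure <.> of i.i.d. spins of mean m one has
   <s_i s_j> = m^2 + delta_ij (1 - m^2), hence <S^2> = M K with
   K = 1 + (M - 1) m^2, and <.> is invariant under permutations of the sites.
   The hypothesis of the theorem reads b K > 1.

   - Instability of p = 0: along the diagonal p = e 1 the free energy is
     g(e 1) = ln 2 - b M e^2 / 2 + <ln cosh (b e S)>, and ln cosh x >=
     x^2 (1 - d)^2 / 2 for |x| <= d < 1; for d small enough this beats the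
     quadratic loss because b K (1 - d)^2 > 1.
   - Scalar equation: by exchangeability <s_i tanh (b p S)> = G(p) / M with
     G(p) = <S tanh (b p S)>.  Since tanh is strictly concave on [0, oo),
     G(p) / p is strictly decreasing, so G(p) = M p has at most one root
     p > 0; tanh y >= y / (1 + y) makes G(p) - M p positive for small p, and
     G <= M makes it negative at p = 2, so the IVT provides the root.
   - Vector equation: s . (p 1) = p S, so each component of the vector
     equation at p 1 is the scalar one; -pbar 1 follows since G is odd. *)

Section Tanh.
Context {R : realType}.
Implicit Types x y k N p q : R.

(* tanh as a function of e^{2x}; monotonicity and bounds are read off from it. *)
Lemma tanh_expR x : tanh x = 1 - 2 / (expR (2 * x) + 1).
Proof.
have ex_gt0 := expR_gt0 x.
have -> : expR (2 * x) = expR x * expR x by rewrite -expRD; congr expR; ring.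
rewrite /tanh expRN; field.
by rewrite !gt_eqF ?addr_gt0 ?mulr_gt0 ?invr_gt0.
Qed.

Lemma tanhN x : tanh (- x) = - tanh x.
Proof. by rewrite /tanh opprK -mulNr opprB; congr (_ / _); exact: addrC. Qed.

Lemma tanh0 : tanh (0 : R) = 0.
Proof. by rewrite /tanh oppr0 subrr mul0r. Qed.

Lemma tanh_le1 x : tanh x <= 1.
Proof. by rewrite tanh_expR gerBl divr_ge0 // ltW // addr_gt0 ?expR_gt0. Qed.

Lemma ltr_tanh x y : x < y -> tanh x < tanh y.
Proof.
move=> lt_xy; rewrite !tanh_expR ltrD2l ltrN2 ltr_pM2l //.
by rewrite ltf_pV2 ?posrE ?addr_gt0 ?expR_gt0 // ltrD2r ltr_expR ltr_pM2l.
Qed.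

Lemma tanh_ge0 x : 0 <= x -> 0 <= tanh x.
Proof.
rewrite le_eqVlt => /predU1P[<-|/ltr_tanh]; first by rewrite tanh0.
by rewrite tanh0 => /ltW.
Qed.

(* tanh x >= x / (1 + x) on [0, oo), from e^{2x} >= 1 + 2x *)
Lemma tanh_lb x : 0 <= x -> x / (1 + x) <= tanh x.
Proof.
move=> x_ge0; have e2x := expR_ge1Dx (2 * x).
have -> : x / (1 + x) = 1 - 1 / (1 + x) by field; lra.
rewrite tanh_expR lerD2l lerN2 ler_pdivrMr ?addr_gt0 ?expR_gt0 //.
by rewrite mulrAC ler_pdivlMr; lra.
Qed.

Lemma is_derive_tanh x : is_derive x 1 (@tanh R) (1 - tanh x ^+ 2).
Proof.
have dN : is_derive x 1 (fun y : R => expR (- y)) (- expR (- x)).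
  by have := is_derive1_comp (is_derive_expR (- x)) (is_deriveNid x 1); rewrite mulrN1.
have dnum := is_deriveB (is_derive_expR x) dN.
have dden := is_deriveD (is_derive_expR x) dN.
have den_gt0 : 0 < expR x + expR (- x) by rewrite addr_gt0 ?expR_gt0.
have den_neq0 : (expR + (fun y => expR (- y))) x != 0 by rewrite gt_eqF.
rewrite /tanh; apply: (is_derive_eq (is_deriveM dnum (is_deriveV den_neq0 dden))).
by rewrite /GRing.scale /= !fctE opprK; field; rewrite gt_eqF.
Qed.

Lemma continuous_tanh : continuous (@tanh R).
Proof.
move=> x; apply/differentiable_continuous/derivable1_diffP.
by case: (is_derive_tanh x).
Qed.

(* Strict concavity of tanh on [0, oo) in chord form: x |-> tanh x / x is
   strictly decreasing; by the mean value theorem on [0, a] and [a, b],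
   since tanh' = 1 - tanh^2 is strictly decreasing on [0, oo). *)
Lemma tanh_chord (a b : R) : 0 < a -> a < b -> a * tanh b < b * tanh a.
Proof.
move=> a_gt0 lt_ab.
have cont (c d : R) : {within `[c, d], continuous (@tanh R)}%classic.
  exact: continuous_subspaceT continuous_tanh.
have [c1 + e1] := MVT a_gt0 (fun z _ => is_derive_tanh z) (cont 0 a).
have [c2 + e2] := MVT lt_ab (fun z _ => is_derive_tanh z) (cont a b).
rewrite !in_itv /= => /andP[c2_gt_a c2_lt_b] /andP[c1_gt0 c1_lt_a].
have t12 : tanh c1 < tanh c2 by apply: ltr_tanh; lra.
have t1 : 0 <= tanh c1 by apply: tanh_ge0; lra.
have slope : 1 - tanh c2 ^+ 2 < 1 - tanh c1 ^+ 2 by rewrite !expr2; nra.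
rewrite tanh0 !subr0 in e1.
have -> : tanh b = tanh a + (1 - tanh c2 ^+ 2) * (b - a) by rewrite -e2; ring.
rewrite e1; have : 0 < a * (b - a) by apply: mulr_gt0; lra.
nra.
Qed.

Lemma xtanh_normr x k : x * tanh (k * x) = `|x| * tanh (k * `|x|).
Proof.
by case: (lerP 0 x) => [/ger0_norm|/ltr0_norm] ->; rewrite // mulrN tanhN mulrNN.
Qed.

Lemma xtanh_le x k : x * tanh (k * x) <= `|x|.
Proof. by rewrite xtanh_normr ler_piMr ?tanh_le1. Qed.

(* From tanh y >= y / (1 + y): a quadratic lower bound, uniform on |x| <= N. *)
Lemma xtanh_lb x k N : 0 <= k -> `|x| <= N ->
  k / (1 + k * N) * x ^+ 2 <= x * tanh (k * x).
Proof.
move=> k_ge0 x_le_N; rewrite xtanh_normr -real_normK ?num_real //.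
set t := `|x| in x_le_N *; have t_ge0 : 0 <= t := normr_ge0 x.
have kt_ge0 : 0 <= k * t by rewrite mulr_ge0.
have kt_le : k * t <= k * N by rewrite ler_wpM2l.
have -> : k / (1 + k * N) * t ^+ 2 = t * (k * t / (1 + k * N)) by ring.
apply: ler_wpM2l => //; apply: le_trans (tanh_lb _ kt_ge0); apply: ler_wpM2l => //.
by rewrite lef_pV2 ?posrE ?lerD2l //; lra.
Qed.

(* tanh (k x) / x decreases strictly in k > 0 for x != 0 (concavity of tanh). *)
Lemma xtanh_ratio x k q p : 0 < k -> 0 < q -> q < p -> x != 0 ->
  q * (x * tanh (k * p * x)) < p * (x * tanh (k * q * x)).
Proof.
move=> k_gt0 q_gt0 lt_qp x_neq0.
rewrite (xtanh_normr x (k * p)) (xtanh_normr x (k * q)) !(mulrCA _ `|x|).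
set t := `|x|; have t_gt0 : 0 < t by rewrite normr_gt0.
have kt_gt0 : 0 < k * t by rewrite mulr_gt0.
have := @tanh_chord (k * q * t) (k * p * t).
have -> : k * q * t = k * t * q by ring.
have -> : k * p * t = k * t * p by ring.
by rewrite -!(mulrA (k * t)) !ltr_pM2l //; apply; rewrite ?mulr_gt0.
Qed.

Lemma xtanh_ratio_le x k q p : 0 < k -> 0 < q -> q < p ->
  q * (x * tanh (k * p * x)) <= p * (x * tanh (k * q * x)).
Proof.
move=> k_gt0 q_gt0 lt_qp; have [->|x_neq0] := eqVneq x 0; first by rewrite !mul0r !mulr0.
exact/ltW/xtanh_ratio.
Qed.
End Tanh.

Section LnCosh.
Context {R : realType}.
Implicit Types x t : R.

Lemma cosh_normr x : cosh `|x| = cosh x.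
Proof.
by case: (lerP 0 x) => [/ger0_norm|/ltr0_norm] ->; rewrite // /cosh opprK addrC.
Qed.

(* 2 (cosh t - 1) = (e^t - 1)^2 e^{-t}, with e^t - 1 >= t and e^{-t} >= 1 - t *)
Lemma cosh_lb t : 0 <= t -> t ^+ 2 * (1 - t) / 2 <= cosh t - 1.
Proof.
move=> t_ge0; have e_ge := expR_ge1Dx t; have e'_ge := expR_ge1Dx (- t).
have e'_gt0 := expR_gt0 (- t).
have -> : cosh t - 1 = (expR t - 1) ^+ 2 * expR (- t) / 2.
  have eE : expR t * expR (- t) = 1 by rewrite -expRD subrr expR0.
  have -> : (expR t - 1) ^+ 2 * expR (- t)
          = expR t * (expR t * expR (- t)) - 2 * (expR t * expR (- t)) + expR (- t).
    by ring.
  by rewrite eE /cosh; field.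
rewrite ler_pM2r // (@le_trans _ _ (t ^+ 2 * expR (- t))) //.
  by apply: ler_wpM2l; [exact: sqr_ge0 | lra].
by apply: ler_wpM2r; [exact: ltW | rewrite lerXn2r ?nnegrE //; lra].
Qed.

(* cosh t <= e^t <= 1 / (1 - t) for 0 <= t <= 1 *)
Lemma cosh_ub t : 0 <= t <= 1 -> cosh t * (1 - t) <= 1.
Proof.
case/andP=> t_ge0 t_le1; have e'_ge := expR_ge1Dx (- t).
have e'_le : expR (- t) <= expR t by rewrite ler_expR; lra.
apply: (@le_trans _ _ (expR t * expR (- t))); last by rewrite -expRD subrr expR0.
apply: (@le_trans _ _ (expR t * (1 - t))).
  by apply: ler_wpM2r; rewrite /cosh; lra.
by apply: ler_wpM2l; [exact/ltW/expR_gt0 | lra].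
Qed.

(* ln t >= 1 - 1 / t, i.e. ln (1 + y) <= y applied at y = 1 / t - 1. *)
Lemma ln_ge1BV t : 0 < t -> 1 - t^-1 <= ln t.
Proof.
move=> t_gt0; have inv_gt0 : 0 < t^-1 by rewrite invr_gt0.
have : -1 < t^-1 - 1 by lra.
move/le_ln1Dx; rewrite addrCA subrr addr0 lnV ?posrE //; lra.
Qed.

(* Quadratic lower bound on ln cosh, uniform on |x| <= d < 1: combine
   ln C >= (C - 1) / C with the two bounds above on C = cosh |x|. *)
Lemma lncosh_lb x (d : R) : `|x| <= d -> d < 1 ->
  x ^+ 2 * (1 - d) ^+ 2 / 2 <= ln (cosh x).
Proof.
move=> x_le_d d_lt1; rewrite -cosh_normr -real_normK ?num_real //.
set t := `|x| in x_le_d *; have t_ge0 : 0 <= t := normr_ge0 x.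
have c_lb := cosh_lb t t_ge0; have c_ub : cosh t * (1 - t) <= 1 by apply: cosh_ub; lra.
have c_gt0 : 0 < cosh t by rewrite /cosh divr_gt0 // addr_gt0 ?expR_gt0.
have inv_lb : 1 - t <= (cosh t)^-1 by rewrite -(ler_pM2l c_gt0) mulfV ?gt_eqF.
apply: le_trans (ln_ge1BV _ c_gt0).
have -> : 1 - (cosh t)^-1 = (cosh t - 1) * (cosh t)^-1 by field; rewrite gt_eqF.
apply: (@le_trans _ _ (t ^+ 2 * (1 - t) / 2 * (1 - t))); last first.
  apply: ler_pM => //; last lra.
  by apply: divr_ge0 => //; apply: mulr_ge0; [exact: sqr_ge0 | lra].
have : (1 - d) ^+ 2 <= (1 - t) ^+ 2 by rewrite lerXn2r ?nnegrE //; lra.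
have := sqr_ge0 t; nra.
Qed.
End LnCosh.

Section ProductMeasure.
Context {R : realType}.
Variables (M : nat) (m : R).
Implicit Types (s : {ffun 'I_M -> bool}) (f g : {ffun 'I_M -> bool} -> R).

Definition pweight s : R := \prod_(i < M) ((1 + m * spin (s i)) / 2).

(* Expectation under this product measure; [avg] is its instance m = m0 bh. *)
Definition pavg f : R := \sum_s pweight s * f s.

Definition spinsum s : R := \sum_(mu < M) spin (s mu).

Lemma eq_pavg f g : f =1 g -> pavg f = pavg g.
Proof. by move=> fg; apply: eq_bigr => s _; rewrite fg. Qed.

Lemma pavgZ c f : pavg (fun s => c * f s) = c * pavg f.
Proof. by rewrite /pavg mulr_sumr; apply: eq_bigr => s _; rewrite mulrCA. Qed.

Lemma pavgN f : pavg (fun s => - f s) = - pavg f.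
Proof. by rewrite /pavg -sumrN; apply: eq_bigr => s _; rewrite mulrN. Qed.

Lemma pavg_sum (I : finType) (F : I -> {ffun 'I_M -> bool} -> R) :
  pavg (fun s => \sum_(i : I) F i s) = \sum_(i : I) pavg (F i).
Proof. by rewrite /pavg; under eq_bigr do rewrite mulr_sumr; exact: exchange_big. Qed.

Lemma pavg_prod (phi : 'I_M -> bool -> R) :
  pavg (fun s => \prod_(i < M) phi i (s i)) =
  \prod_(i < M) \sum_(b : bool) (1 + m * spin b) / 2 * phi i b.
Proof.
by rewrite bigA_distr_bigA /pavg; apply: eq_bigr => s _; rewrite [RHS]big_split.
Qed.

Lemma pavg_cst c : pavg (fun => c) = c.
Proof.
have total : pavg (fun => 1) = 1.
  have := pavg_prod (fun _ _ => 1); rewrite big1_eq => ->.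
  by rewrite big1 // => i _; rewrite big_bool /= /spin; field.
by rewrite -[RHS]mulr1 -total -pavgZ; apply: eq_pavg => s; rewrite mulr1.
Qed.

Lemma spin_sqr (b : bool) : spin b * spin b = 1 :> R.
Proof. by case: b; rewrite /spin ?mulr1 ?mulrNN ?mulr1. Qed.

Lemma pavg_spin_pair (i j : 'I_M) :
  pavg (fun s => spin (s i) * spin (s j)) = m ^+ 2 + (j == i)%:R * (1 - m ^+ 2).
Proof.
have [->|neq_ji] := eqVneq j i.
  rewrite (@eq_pavg _ (fun => 1)) => [|s]; last exact: spin_sqr.
  by rewrite pavg_cst ?eqxx /=; ring.
pose at_i (k : 'I_M) (x : R) := if k == i then x else 1.
pose at_j (k : 'I_M) (x : R) := if k == j then x else 1.
have pick F (k0 : 'I_M) : \prod_(k < M) (if k == k0 then F k else 1) = F k0 :> R.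
  by rewrite -big_mkcond big_pred1_eq.
have -> : pavg (fun s => spin (s i) * spin (s j))
        = pavg (fun s => \prod_(k < M) (at_i k (spin (s k)) * at_j k (spin (s k)))).
  by apply: eq_pavg => s; rewrite big_split /= !pick.
rewrite (pavg_prod (fun k b => at_i k (spin b) * at_j k (spin b))).
rewrite (eq_bigr (fun k => at_i k m * at_j k m)) => [|k _].
  by rewrite big_split /= !pick mul0r addr0 expr2.
rewrite big_bool /= /at_i /at_j /spin.
case: (eqVneq k i) => [->|_]; first by rewrite eq_sym (negbTE neq_ji); field.
by case: (k == j); field.
Qed.

Lemma pavg_spinsum_sqr :
  pavg (fun s => spinsum s ^+ 2) = M%:R * (1 + (M%:R - 1) * m ^+ 2).
Proof.
have -> : pavg (fun s => spinsum s ^+ 2)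
        = \sum_(i < M) \sum_(j < M) pavg (fun s => spin (s i) * spin (s j)).
  under [RHS]eq_bigr do rewrite -pavg_sum; rewrite -pavg_sum.
  apply: eq_pavg => s; rewrite /spinsum expr2 mulr_suml.
  by under eq_bigr do rewrite mulr_sumr.
under eq_bigr do under eq_bigr do rewrite pavg_spin_pair.
have row (i : 'I_M) : \sum_(j < M) (m ^+ 2 + (j == i)%:R * (1 - m ^+ 2))
                      = M%:R * m ^+ 2 + (1 - m ^+ 2).
  rewrite big_split /= sumr_const card_ord mulr_natl (bigD1 i) //= eqxx mul1r.
  by rewrite big1 ?addr0 // => j /negbTE ->; rewrite mul0r.
under eq_bigr do rewrite row.
by rewrite sumr_const card_ord -mulr_natl; ring.
Qed.

(* Exchangeability: swapping sites i and j preserves both the weights and S. *)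
Lemma pavg_exchange (i j : 'I_M) (h : R -> R) :
  pavg (fun s => spin (s i) * h (spinsum s)) = pavg (fun s => spin (s j) * h (spinsum s)).
Proof.
pose swap s : {ffun 'I_M -> bool} := [ffun k => s (tperm i j k)].
have swap_inj : injective swap.
  move=> s1 s2 /ffunP eq12; apply/ffunP => k.
  by have := eq12 (tperm i j k); rewrite !ffunE tpermK.
have swap_prod (F : 'I_M -> R) : \prod_(k < M) F (tperm i j k) = \prod_(k < M) F k.
  by rewrite [RHS](reindex_inj (@perm_inj _ (tperm i j))).
have swap_sum (F : 'I_M -> R) : \sum_(k < M) F (tperm i j k) = \sum_(k < M) F k.
  by rewrite [RHS](reindex_inj (@perm_inj _ (tperm i j))).
rewrite /pavg (reindex_inj swap_inj); apply: eq_bigr => s _.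
rewrite /pweight /spinsum ffunE tpermL.
under eq_bigr do rewrite ffunE; under [in spin _ * _]eq_bigr do rewrite ffunE.
by rewrite (swap_prod (fun k => (1 + m * spin (s k)) / 2)) (swap_sum (fun k => spin (s k))).
Qed.

Lemma pavg_site (i : 'I_M) (h : R -> R) :
  M%:R * pavg (fun s => spin (s i) * h (spinsum s))
  = pavg (fun s => spinsum s * h (spinsum s)).
Proof.
have -> : pavg (fun s => spinsum s * h (spinsum s))
        = pavg (fun s => \sum_(k < M) spin (s k) * h (spinsum s)).
  by apply: eq_pavg => s; rewrite {1}/spinsum mulr_suml.
rewrite pavg_sum (eq_bigr _ (fun k _ => pavg_exchange k i h)).
by rewrite sumr_const card_ord mulr_natl.
Qed.

Lemma spinsum_true : spinsum [ffun => true] = M%:R.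
Proof.
by rewrite /spinsum (eq_bigr (fun => 1)) ?sumr_const ?card_ord // => k _; rewrite ffunE.
Qed.

Lemma normr_spinsum s : `|spinsum s| <= M%:R.
Proof.
rewrite /spinsum; apply: le_trans (ler_norm_sum _ _ _) _.
rewrite (eq_bigr (fun => 1)) ?sumr_const ?card_ord // => k _.
by rewrite /spin; case: (s k); rewrite ?normrN normr1.
Qed.

Section Monotone.
Hypothesis m_bound : -1 <= m <= 1.

Lemma pweight_ge0 s : 0 <= pweight s.
Proof.
case/andP: m_bound => ? ?; apply: prodr_ge0 => k _; apply: divr_ge0 => //.
by rewrite /spin; case: (s k); lra.
Qed.

Lemma ler_pavg f g : (forall s, f s <= g s) -> pavg f <= pavg g.
Proof. by move=> fg; apply: ler_sum => s _; apply: ler_wpM2l; rewrite ?pweight_ge0. Qed.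

Lemma ltr_pavg f g s0 :
  (forall s, f s <= g s) -> f s0 < g s0 -> 0 < pweight s0 -> pavg f < pavg g.
Proof.
move=> fg fg0 w0; rewrite /pavg (bigD1 s0) //= [ltRHS](bigD1 s0) //=.
apply: ltr_leD; first by rewrite ltr_pM2l.
by apply: ler_sum => s _; apply: ler_wpM2l; rewrite ?pweight_ge0.
Qed.
End Monotone.

Lemma pweight_true : -1 < m -> 0 < pweight [ffun => true].
Proof. by move=> ?; apply: prodr_gt0 => k _; rewrite ffunE /spin; lra. Qed.
End ProductMeasure.
Arguments spinsum {R M} s.

Section MeanField.
Context {R : realType}.
Variables (M : nat) (m b : R).
Hypotheses (M_gt0 : (0 < M)%N) (m_bound : -1 <= m <= 1) (b_gt0 : 0 < b).
Implicit Types p q : R.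

(* K = <S^2> / M, the coupling of the equation linearized at p = 0. *)
Local Notation K := (1 + (M%:R - 1) * m ^+ 2).

(* G(p) = <S tanh (b p S)>; by exchangeability the scalar equation reads
   G(p) = M p. *)
Definition response p : R := pavg M m (fun s => spinsum s * tanh (b * p * spinsum s)).

Lemma natM_gt0 : 0 < M%:R :> R.
Proof. by rewrite ltr0n. Qed.

Lemma pavg_site_tanh (i : 'I_M) p :
  pavg M m (fun s => spin (s i) * tanh (b * p * spinsum s)) = response p / M%:R.
Proof.
have /= site := pavg_site M m i (fun S => tanh (b * p * S)).
by rewrite /response -site [RHS]mulrC mulKf // gt_eqF // natM_gt0.
Qed.

Lemma responseN p : response (- p) = - response p.
Proof.
by rewrite /response -pavgN; apply: eq_pavg => s; rewrite mulrN mulNr tanhN mulrN.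
Qed.

Lemma response_le p : response p <= M%:R.
Proof.
rewrite -[leRHS](pavg_cst M m); apply: ler_pavg => // s /=.
exact: le_trans (xtanh_le _ _) (normr_spinsum M s).
Qed.

(* Linear lower bound from tanh y >= y / (1 + y) and <S^2> = M K. *)
Lemma response_lb p : 0 <= p -> b * p / (1 + b * p * M%:R) * (M%:R * K) <= response p.
Proof.
move=> p_ge0; rewrite -pavg_spinsum_sqr -pavgZ; apply: ler_pavg => // s /=.
apply: xtanh_lb; last exact: normr_spinsum.
by rewrite mulr_ge0 // ltW.
Qed.

Lemma continuous_response : continuous response.
Proof.
have -> : response
        = fun p => \sum_s (pweight M m s * spinsum s) * tanh ((b * spinsum s) * p).
  by apply/funext => p; apply: eq_bigr => s _; rewrite mulrA (mulrAC b).
apply: (continuous_big (op := +%R) (x0 := 0)); first exact: add_continuous.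
move=> s _ p; set k := b * spinsum s.
apply: (continuous_comp (f := fun q => tanh (k * q))); last exact: mulrl_continuous.
apply: (continuous_comp (f := *%R k)); [exact: mulrl_continuous | exact: continuous_tanh].
Qed.

(* G(p) / p is strictly decreasing on (0, oo): the configuration with all
   spins up has positive weight and S = M != 0. *)
Lemma response_ratio q p : -1 < m -> 0 < q -> q < p ->
  response p * q < response q * p.
Proof.
move=> m_gtN1 q_gt0 lt_qp; rewrite ![_ * q]mulrC ![_ * p]mulrC -!pavgZ.
apply: (ltr_pavg _ _ m_bound _ _ [ffun => true]); last exact: pweight_true.
  by move=> s; apply: xtanh_ratio_le.
by apply: xtanh_ratio => //; rewrite spinsum_true pnatr_eq0 -lt0n.
Qed.

(* K <= M since m^2 <= 1; it keeps the IVT interval below inside (0, 2]. *)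
Lemma K_le_M : K <= M%:R.
Proof.
have M_ge1 : 1 <= M%:R :> R by rewrite ler1n.
have : m ^+ 2 <= 1 by case/andP: m_bound => ? ?; rewrite expr2; nra.
by move=> ?; nra.
Qed.

(* Above the threshold b K > 1, G(p) - M p is positive at a small p0 > 0
   (linear lower bound) and negative at p = 2 (G <= M): by the IVT it vanishes. *)
Lemma response_fixpoint : 1 < b * K -> exists2 p, 0 < p & response p = M%:R * p.
Proof.
move=> bK_gt1; have M_pos := natM_gt0; have K_le := K_le_M.
set c := b * K in bK_gt1.
pose p0 := (c - 1) / (2 * b * M%:R).
have bM_gt0 : 0 < 2 * b * M%:R by rewrite !mulr_gt0.
have p0_gt0 : 0 < p0 by rewrite divr_gt0 // subr_gt0.
have bp0M : b * p0 * M%:R = (c - 1) / 2 by rewrite /p0; field; rewrite !gt_eqF.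
have c_le : c <= b * M%:R by rewrite ler_wpM2l // ltW.
have p0_le2 : p0 <= 2 by rewrite /p0 ler_pdivrMr //; lra.
pose g p := response p - M%:R * p.
have g_cont : continuous g.
  by move=> x; apply: continuousB; [exact: continuous_response | exact: mulrl_continuous].
have g2_lt0 : g 2 < 0 by have := response_le 2; rewrite /g; lra.
have gp0_gt0 : 0 < g p0.
  rewrite /g subr_gt0; apply: lt_le_trans (response_lb p0 (ltW p0_gt0)).
  have -> : b * p0 / (1 + b * p0 * M%:R) * (M%:R * K)
          = M%:R * p0 + M%:R * p0 * ((c - 1) / (c + 1)).
    by rewrite bp0M /c; field; rewrite -/c gt_eqF //; lra.
  by rewrite ltrDl !mulr_gt0 ?invr_gt0 //; lra.
have [|p /andP[p_ge_p0 _] gp0] := IVT p0_le2 (continuous_subspaceT g_cont) (v := 0).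
  by rewrite ge_min le_max (ltW g2_lt0) (ltW gp0_gt0) orbT.
by exists p; [exact: lt_le_trans p0_gt0 p_ge_p0 | apply/eqP; rewrite -subr_eq0; apply/eqP].
Qed.

(* Since G(p) / p is strictly decreasing, G(p) = M p has at most one root p > 0. *)
Lemma response_fixpoint_unique p q : -1 < m -> 0 < p -> 0 < q ->
  response p = M%:R * p -> response q = M%:R * q -> p = q.
Proof.
move=> m_gtN1 p_gt0 q_gt0 Gp Gq.
have ordered_roots (u v : R) : 0 < u -> u < v ->
    response u = M%:R * u -> response v = M%:R * v -> False.
  move=> u_gt0 lt_uv Gu Gv; have := response_ratio u v m_gtN1 u_gt0 lt_uv.
  by rewrite Gu Gv mulrAC ltxx.
have [lt_pq|lt_qp|//] := ltgtP p q.
  by case: (ordered_roots p q p_gt0 lt_pq Gp Gq).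
by case: (ordered_roots q p q_gt0 lt_qp Gq Gp).
Qed.

Lemma pavg_lncosh_lb e d : 0 <= e -> b * e * M%:R <= d -> d < 1 ->
  (b * e) ^+ 2 * (1 - d) ^+ 2 / 2 * (M%:R * K)
    <= pavg M m (fun s => ln (cosh (b * e * spinsum s))).
Proof.
move=> e_ge0 beM_le d_lt1; rewrite -pavg_spinsum_sqr -pavgZ.
apply: ler_pavg => // s /=.
have -> : (b * e) ^+ 2 * (1 - d) ^+ 2 / 2 * spinsum s ^+ 2
        = (b * e * spinsum s) ^+ 2 * (1 - d) ^+ 2 / 2 by ring.
apply: lncosh_lb d_lt1; apply: le_trans beM_le.
have be_ge0 : 0 <= b * e by rewrite mulr_ge0 // ltW.
by rewrite normrM ger0_norm //; apply: ler_wpM2l => //; exact: normr_spinsum.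
Qed.

Lemma lncosh_gain : 1 < b * K ->
  exists e, b * e ^+ 2 * M%:R / 2 < pavg M m (fun s => ln (cosh (b * e * spinsum s))).
Proof.
move=> bK_gt1; set c := b * K in bK_gt1; have M_pos := natM_gt0.
pose d := (c - 1) / (4 * c).
have c_gt0 : 0 < c by lra.
have d_gt0 : 0 < d by apply: divr_gt0; lra.
have cd : c * d = (c - 1) / 4 by rewrite /d; field; lra.
have d_lt1 : d < 1 by rewrite -(ltr_pM2l c_gt0) cd; lra.
pose e := d / (b * M%:R).
have e_gt0 : 0 < e by rewrite divr_gt0 // mulr_gt0.
have beM : b * e * M%:R = d by rewrite /e; field; rewrite !gt_eqF.
have beM_le : b * e * M%:R <= d by rewrite beM lexx.
exists e; apply: (lt_le_trans _ (pavg_lncosh_lb e d (ltW e_gt0) beM_le d_lt1)).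
have gain : 1 < c * (1 - d) ^+ 2.
  have cdd_ge0 : 0 <= c * d * d by apply: mulr_ge0; [apply: mulr_ge0 |]; exact: ltW.
  have -> : c * (1 - d) ^+ 2 = c - 2 * (c * d) + c * d * d by ring.
  lra.
have -> : (b * e) ^+ 2 * (1 - d) ^+ 2 / 2 * (M%:R * K)
        = b * e ^+ 2 * M%:R / 2 * (c * (1 - d) ^+ 2) by rewrite /c; ring.
have loss_gt0 : 0 < b * e ^+ 2 * M%:R / 2.
  by apply: divr_gt0 => //; rewrite mulr_gt0 // mulr_gt0 // exprn_gt0.
by rewrite ltr_pMr.
Qed.
End MeanField.

Section Model.
Context {R : realType}.

(* m0 bh is the supremum of a set containing 0 and bounded by 1 (tanh <= 1). *)
Lemma m0_bounds (bh : R) : 0 <= m0 bh <= 1.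
Proof.
set A := [set m : R | 0 <= m /\ m = tanh (bh * m)]%classic.
have A0 : A 0 by split => //; rewrite mulr0 tanh0.
have A_ub : ubound A 1 by move=> x [_ ->]; exact: tanh_le1.
have A_sup : has_sup A by split; [exists 0 | exists 1].
by rewrite (sup_upper_bound A_sup A0) ge_sup //; exists 0.
Qed.

Lemma avgE (M : nat) (bh : R) (f : {ffun 'I_M -> bool} -> R) :
  avg bh f = pavg M (m0 bh) f.
Proof. by []. Qed.

Lemma sdot_const (M : nat) (s : {ffun 'I_M -> bool}) (p : R) :
  sdot s (fun _ => p) = p * spinsum s.
Proof. by rewrite /sdot mulr_sumr; apply: eq_bigr => i _; rewrite mulrC. Qed.

Lemma gfun_diag (M : nat) (bh b e : R) :
  gfun bh b (fun _ : 'I_M => e) =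
  ln 2 - b * e ^+ 2 * M%:R / 2 + pavg M (m0 bh) (fun s => ln (cosh (b * e * spinsum s))).
Proof.
rewrite /gfun avgE sumr_const card_ord; congr (_ - _ + _).
  by rewrite mulr_natr mulrnAr.
by apply: eq_pavg => s; rewrite sdot_const mulrA.
Qed.

Lemma gfun0 (M : nat) (bh b : R) : gfun bh b (fun _ : 'I_M => 0) = ln 2.
Proof.
rewrite gfun_diag (_ : b * 0 ^+ 2 * M%:R / 2 = 0); last by rewrite expr2 !(mulr0, mul0r).
rewrite (@eq_pavg _ _ _ _ (fun => 0)) ?pavg_cst ?subr0 ?addr0 // => s.
by rewrite mulr0 mul0r /cosh oppr0 expR0 divff ?ln1.
Qed.
End Model.

Theorem mainTheorem7 (R : realType) (M : nat) (hM : (0 < M)%N) (b bh : R)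
  (hb : 0 < b) (hbh : 0 < bh)
  (hcond : b^-1 < 1 + (M%:R - 1) * m0 bh ^+ 2) :
  (exists p : 'I_M -> R, gfun bh b (fun _ : 'I_M => 0) < gfun bh b p) /\
  (exists pbar : R,
     [/\ 0 < pbar,
         pbar = avg bh (fun s => spin (s (Ordinal hM)) *
                          tanh (b * pbar * \sum_(mu < M) spin (s mu))),
         (forall q : R, 0 < q ->
            q = avg bh (fun s => spin (s (Ordinal hM)) *
                          tanh (b * q * \sum_(mu < M) spin (s mu))) ->
            q = pbar),
         (forall i : 'I_M, pbar = avg bh (fun s => spin (s i) *
                          tanh (b * sdot s (fun _ => pbar)))) &
         (forall i : 'I_M, - pbar = avg bh (fun s => spin (s i) *
                          tanh (b * sdot s (fun _ => - pbar))))]).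
Proof.
have [m_ge0 m_le1] := andP (m0_bounds bh); set m := m0 bh in m_ge0 m_le1 hcond *.
have m_bound : -1 <= m <= 1 by apply/andP; split; lra.
have bK_gt1 : 1 < b * (1 + (M%:R - 1) * m ^+ 2).
  by rewrite -(ltr_pM2l hb) mulfV ?gt_eqF in hcond.
have M_neq0 : M%:R != 0 :> R by rewrite pnatr_eq0 -lt0n.
pose G := response M m b.
have fixpointE p : (p = G p / M%:R) <-> (G p = M%:R * p).
  by split=> [Ep|->]; [rewrite {2}Ep mulrC divfK | rewrite [RHS]mulrC mulKf].
have scalar (p : R) : avg bh (fun s => spin (s (Ordinal hM)) *
    tanh (b * p * \sum_(mu < M) spin (s mu))) = G p / M%:R.
  exact: pavg_site_tanh.
have diag (p : R) (i : 'I_M) :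
    avg bh (fun s => spin (s i) * tanh (b * sdot s (fun _ => p))) = G p / M%:R.
  by rewrite avgE -(pavg_site_tanh M m b hM i); apply: eq_pavg => s; rewrite sdot_const mulrA.
split.
  have [e gain] := lncosh_gain M m b hM m_bound hb bK_gt1.
  by exists (fun _ => e); rewrite gfun0 gfun_diag; lra.
have [pbar pbar_gt0 Gpbar] := response_fixpoint M m b hM m_bound hb bK_gt1.
exists pbar; split; first exact: pbar_gt0.
- by rewrite scalar; apply/fixpointE.
- move=> q q_gt0; rewrite scalar => /fixpointE Gq.
  by apply: (response_fixpoint_unique M m b hM m_bound hb) => //; lra.
- by move=> i; rewrite diag; apply/fixpointE.
- by move=> i; rewrite diag /G responseN mulNr; congr (- _); apply/fixpointE.
Qed.
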